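(* Let $(\Omega,\mathcal F,\mathbb P)$ be an atomless probability space and $\mathcal X$ the set of all random variables on it. Let $X\in\mathcal X$ be continuously distributed, let $n\ge1$, $\alpha_1,\dots,\alpha_n>0$ with $\sum_{i=1}^n\alpha_i<1$, and $\beta\in[0,1]$. Define $V_\beta(X)=\inf\Big\{\sum_{i=1}^n\mathrm Q_{\alpha_i}(X_i): (X_1,\dots,X_n)\in\mathcal X^n,\ \sum_{i=1}^nX_i\ge X,\ X_i\uparrow_\beta X \text{ for } i=1,\dots,n\Big\}.$ Then $V_\beta(X)=\mathrm Q_\gamma(X)$, where $\gamma=\beta\wedge\big(\bigvee_{i=1}^n\alpha_i\big)+\sum_{i=1}^n(\alpha_i-\beta)_+$.
   Context: For $\alpha\in(0,1)$ and $Y\in\mathcal X$, $\mathrm Q_\alpha(Y)=\inf\{x\in\mathbb R:\mathbb P(Y\le x)\ge1-\alpha\}$ (the left $(1-\alpha)$-quantile). For $p\in[0,1)$, $\mathrm{VaR}_p(Z)=\inf\{x\in\mathbb R:\mathbb P(Z\le x)>p\}$, $A^Z_p=\{\omega: Z(\omega)>\mathrm{VaR}_p(Z)\}$ and $\mathcal P^Z_p=\{\delta_\omega\times\delta_{\omega'}:\omega\in A^Z_p,\ \omega'\in(A^Z_p)^c\}$. For random variables $Y,Z$, $Y\uparrow_\beta Z$ means that $Y$ and $Z$ are weakly comonotonic with respect to $\bigcup_{p\in[1-\beta,1)}\mathcal P^Z_p$, i.e. (for some representatives of the a.s.-classes of $Y,Z$) $(Y(\omega)-Y(\omega'))(Z(\omega)-Z(\omega'))\ge0$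 for all $p\in[1-\beta,1)$, $\omega\in A^Z_p$, $\omega'\notin A^Z_p$. (For $\beta=0$ this is no constraint.) Random variables equal a.s. are identified; $a\wedge b=\min(a,b)$, $\bigvee$ denotes maximum, $x_+=\max(x,0)$. *)

From HB Require Import structures.
From mathcomp Require Import all_boot all_order all_algebra.
From mathcomp Require Import all_classical all_reals all_analysis.
Set Implicit Arguments. Unset Strict Implicit. Unset Printing Implicit Defensive.
Import Order.TTheory GRing.Theory Num.Theory.
Local Open Scope classical_set_scope.
Local Open Scope ring_scope.

Section Defs.
Context {d : measure_display} {T : measurableType d} {R : realType}.
Variable P : probability T R.

Definition atomless : Prop :=
  forall A : set T, measurable A -> lte 0%E (P A) ->
    exists B : set T, [/\ measurable B, B `<=` A, lte 0%E (P B) & lte (P B) (P A)].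

Definition continuously_distributed (X : T -> R) : Prop :=
  forall x : R, P [set w | X w = x] = 0%E.

Definition quantile (a : R) (Y : T -> R) : R :=
  inf [set x : R | lee ((1 - a)%:E) (P [set w | Y w <= x])].

Definition VaR (p : R) (Z : T -> R) : R :=
  inf [set x : R | lte (p%:E) (P [set w | Z w <= x])].

(* Y ↑_β Z : weak comonotonicity w.r.t. U_{p in [1-β,1)} P^Z_p,
   for some (measurable) representatives of the a.s.-classes of Y and Z. *)
Definition comono_beta (beta : R) (Y Z : T -> R) : Prop :=
  exists Y' Z' : T -> R,
    [/\ measurable_fun setT Y', measurable_fun setT Z',
        {ae P, forall w, Y' w = Y w}, {ae P, forall w, Z' w = Z w} &
        forall p : R, 1 - beta <= p -> p < 1 ->
          forall w w' : T, VaR p Z' < Z' w -> ~ (VaR p Z' < Z' w') ->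
            0 <= (Y' w - Y' w') * (Z' w - Z' w')].

Definition V_beta_set (n : nat) (alpha : 'I_n -> R) (beta : R) (X : T -> R)
    : set (\bar R) :=
  [set ((\sum_(i < n) quantile (alpha i) (Xs i))%:E) |
     Xs in [set Xs : 'I_n -> T -> R |
       [/\ forall i, measurable_fun setT (Xs i),
           {ae P, forall w, X w <= \sum_(i < n) Xs i w} &
           forall i, comono_beta beta (Xs i) X]]].

Definition V_beta (n : nat) (alpha : 'I_n -> R) (beta : R) (X : T -> R) : \bar R :=
  ereal_inf (V_beta_set alpha beta X).

End Defs.

From HB Require Import structures.
From mathcomp Require Import all_boot all_order all_algebra.
From mathcomp Require Import all_classical all_reals all_analysis.
From mathcomp Require Import measurable_realfun lra.
Import Order.TTheory GRing.Theory Num.Theory.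
Local Open Scope classical_set_scope.
Local Open Scope ring_scope.
Set Implicit Arguments. Unset Strict Implicit. Unset Printing Implicit Defensive.

(** Write [T_l = {X > Q_l(X)}]; as X is continuous, [P(T_l) = l]. For a level
    [b <= beta] let [gamma_b = b + sum_i (alpha_i - b)_+].

    Lower bound: let [(X_i)] be feasible and [q_i = Q_{alpha_i}(X_i)], so that
    [P(X_i > q_i) <= alpha_i]. Comonotonicity of [X_i] with [X] across the cut
    [{X > VaR_{1-b}(X)}], an event of probability [b] inside [T_b], forces
    [{X_i > q_i}] either to contain the cut or to miss its complement, whence
    [P({X_i > q_i} \ T_b) <= (alpha_i - b)_+]. As [{X > sum_i q_i}] is covered
    a.s. by [T_b] and the [{X_i > q_i}], it has probability at most [gamma_b],
    i.e. [Q_{gamma_b}(X) <= sum_i q_i].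

    Upper bound: cut [{X > Q_{gamma_b}(X)}] into [T_b] and the layers between
    the consecutive levels [b + sum_{j < i} (alpha_j - b)_+]. Let [S_i] be the
    i-th layer, joined with [T_b] when [b <= alpha_i]; then [P(S_i) <= alpha_i]
    and [X_i = c_i + 1_{S_i} (X - Q_{gamma_b}(X))_+], with
    [sum_i c_i = Q_{gamma_b}(X)], is feasible with [Q_{alpha_i}(X_i) <= c_i].
    Comonotonicity on the cuts of level [p >= 1 - beta] holds because such a
    cut lies in [T_beta], while a layer is nonempty only if [alpha_i > b],
    which is assumed to happen only when [b = beta].

    With [b = beta /\ max_i alpha_i] both bounds apply and [gamma_b] is the
    [gamma] of the statement. *)

Section excess_level.
Variables (R : realDomainType) (n : nat) (alpha : 'I_n -> R) (b : R).

Definition excess_level : R := b + \sum_(i < n) Num.max (alpha i - b) 0.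

Definition partial_excess_level (j : nat) : R :=
  b + \sum_(i < n | (i < j)%N) Num.max (alpha i - b) 0.

Lemma partial_excess_level0 : partial_excess_level 0 = b.
Proof. by rewrite /partial_excess_level big_pred0 ?addr0. Qed.

Lemma partial_excess_level_n : partial_excess_level n = excess_level.
Proof.
by rewrite /partial_excess_level; congr (_ + _); apply: eq_bigl => i; rewrite ltn_ord.
Qed.

Lemma partial_excess_levelS (i : 'I_n) :
  partial_excess_level i.+1 = partial_excess_level i + Num.max (alpha i - b) 0.
Proof.
rewrite /partial_excess_level -addrA (bigD1 i) /= ?ltnSn // addrC; congr (_ + (_ + _)).
by apply: eq_bigl => k; rewrite ltnS andbC ltn_neqAle.
Qed.

Lemma le_partial_excess_level j j' :
  (j <= j')%N -> partial_excess_level j <= partial_excess_level j'.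
Proof.
move=> jj'; rewrite lerD2l [leLHS]big_mkcond [leRHS]big_mkcond /=.
apply: ler_sum => k _; case: ifP => [kj|_]; first by rewrite (leq_trans kj jj').
by case: ifP; rewrite // le_max lexx orbT.
Qed.

Lemma le_excess_level k : alpha k <= excess_level.
Proof.
rewrite /excess_level (bigD1 k) //=.
apply: (@le_trans _ _ (b + Num.max (alpha k - b) 0)); first by rewrite -lerBlDl le_max lexx.
by rewrite lerD2l lerDl; apply: sumr_ge0 => i _; rewrite le_max lexx orbT.
Qed.

Lemma excess_level_le_sum k :
  (forall i, 0 <= alpha i) -> 0 <= b <= alpha k -> excess_level <= \sum_i alpha i.
Proof.
move=> a0 /andP[b0 bak]; rewrite /excess_level (bigD1 k) //= [leRHS](bigD1 k) //=.
rewrite (_ : Num.max (alpha k - b) 0 = alpha k - b); last by apply/max_idPl; rewrite subr_ge0.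
rewrite addrA [b + _]addrC subrK lerD2l; apply: ler_sum => i _.
by rewrite ge_max a0 andbT lerBlDr lerDl.
Qed.

End excess_level.

Lemma excess_level_min (R : realDomainType) n (alpha : 'I_n -> R) (beta : R) k :
  (forall i, alpha i <= alpha k) ->
  excess_level alpha (Num.min beta (alpha k)) =
    Num.min beta (alpha k) + \sum_i Num.max (alpha i - beta) 0.
Proof.
move=> ak; rewrite /excess_level; congr (_ + _); apply: eq_bigr => i _.
have [//|lt_beta] := leP beta (alpha k).
rewrite !(max_idPr _) // subr_le0 ?ak //.
exact/ltW/(le_lt_trans (ak i)).
Qed.

Section measure_ae.
Context d (T : measurableType d) (R : realType) (mu : {measure set T -> \bar R}).

Lemma le_measure_ae (A B : set T) : measurable A -> measurable B ->
  {ae mu, forall w, A w -> B w} -> (mu A <= mu B)%E.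
Proof.
move=> mA mB [N [mN N0 AB]].
rewrite -(measureU0 mB mN N0) le_measure ?inE//; first exact: measurableU.
by move=> w Aw; have [Bw|nBw] := pselect (B w); [left|right; apply: AB => /(_ Aw)].
Qed.

Lemma eq_measure_ae (A B : set T) : measurable A -> measurable B ->
  {ae mu, forall w, A w <-> B w} -> mu A = mu B.
Proof.
move=> mA mB AB; apply/le_anti/andP; split; apply: le_measure_ae => //;
  by apply: filterS AB => w [].
Qed.

Lemma le_measure_bigsetU I (r : seq I) (F : I -> set T) :
  (forall i, measurable (F i)) ->
  (mu (\big[setU/set0]_(i <- r) F i) <= \sum_(i <- r) mu (F i))%E.
Proof.
move=> mF; suff [] : measurable (\big[setU/set0]_(i <- r) F i) /\
  (mu (\big[setU/set0]_(i <- r) F i) <= \sum_(i <- r) mu (F i))%E by [].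
elim/big_ind2 : _ => [|U a V b [mU Ua] [mV Vb]|i _] //.
- by rewrite measure0.
split; first exact: measurableU.
by apply: le_trans (measureU2 mu mU mV) _; exact: leeD.
Qed.

Lemma le_measure_union_bound (I : finType) (E A : set T) (D : I -> set T) :
  measurable E -> measurable A -> (forall i, measurable (D i)) ->
  {ae mu, forall w, E w -> A w \/ exists i, D i w} ->
  (mu E <= mu A + \sum_i mu (D i))%E.
Proof.
move=> mE mA mD cover; set U := \big[setU/set0]_i D i.
have mU : measurable U by exact: bigsetU_measurable.
apply: (@le_trans _ _ (mu (A `|` U))).
  apply: le_measure_ae => //; first exact: measurableU.
  apply: filterS cover => w EAD /EAD [Aw|[i Dw]]; [by left|right].
  by rewrite /U (bigD1 i) //; left.
by apply: le_trans (measureU2 mu mA mU) _; rewrite leeD2l // le_measure_bigsetU.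
Qed.

End measure_ae.

(** * Distribution functions, quantiles and upper tails *)

Lemma measurable_set_bool d (T : measurableType d) (b : T -> bool) :
  measurable_fun setT b -> measurable [set w | b w].
Proof.
move=> mb; have := mb measurableT [set true] I.
by rewrite setTI; congr measurable; apply/seteqP; split => w /=.
Qed.

Section distribution_function.
Context d (T : measurableType d) (R : realType) (P : probability T R).
Variable X : T -> R.
Hypothesis mX : measurable_fun setT X.
Local Notation F x := (P [set w | (X w <= x)%R]).

Lemma measurable_le_cst x : measurable [set w | X w <= x].
Proof. exact/measurable_set_bool/measurable_fun_ler. Qed.

Lemma measurable_lt_cst x : measurable [set w | X w < x].
Proof. exact/measurable_set_bool/measurable_fun_ltr. Qed.

Lemma measurable_cst_lt x : measurable [set w | x < X w].
Proof. exact/measurable_set_bool/measurable_fun_ltr. Qed.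

Lemma le_cdf x y : x <= y -> (F x <= F y)%E.
Proof.
move=> xy; rewrite le_measure ?inE //; try exact: measurable_le_cst.
by move=> w /= /le_trans; apply.
Qed.

Lemma cdf_bigcup (u : R^nat) : nondecreasing_seq u ->
  P [set w | exists n, X w <= u n] = ereal_sup (range (fun n => F (u n))).
Proof.
move=> ndu; pose G n := [set w | X w <= u n].
have ndG : nondecreasing_seq G.
  by move=> m k mk; apply/subsetPset => w /le_trans; apply; exact: ndu.
have -> : [set w | exists n, X w <= u n] = \bigcup_n G n.
  by apply/seteqP; split => w /= [n]; exists n.
have mG n : measurable (G n) by exact: measurable_le_cst.
have ndPG : nondecreasing_seq (P \o G).
  by move=> m k mk; rewrite le_measure ?inE //; exact/subsetPset/ndG.
apply: (cvg_unique _ _ (ereal_nondecreasing_cvgn ndPG)) => //.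
exact: (nondecreasing_cvg_mu mG (bigcup_measurable (fun n _ => mG n)) ndG).
Qed.

Lemma cdf_bigcap (u : R^nat) : nonincreasing_seq u ->
  P [set w | forall n, X w <= u n] = ereal_inf (range (fun n => F (u n))).
Proof.
move=> niu; pose G n := [set w | X w <= u n].
have niG : nonincreasing_seq G.
  by move=> m k mk; apply/subsetPset => w /le_trans; apply; exact: niu.
have -> : [set w | forall n, X w <= u n] = \bigcap_n G n.
  by apply/seteqP; split => [w h n _|w h n]; exact: h.
have mG n : measurable (G n) by exact: measurable_le_cst.
have niPG : nonincreasing_seq (P \o G).
  by move=> m k mk; rewrite le_measure ?inE //; exact/subsetPset/niG.
apply: (cvg_unique _ _ (ereal_nonincreasing_cvgn niPG)) => //.
apply: (nonincreasing_cvg_mu _ mG (bigcapT_measurable mG) niG).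
by rewrite (le_lt_trans (probability_le1 _ _)) ?ltry.
Qed.

Lemma cdf_gt_exists p : p < 1 -> exists x, (p%:E < F x)%E.
Proof.
move=> p1; have : (p%:E < P [set w | exists n : nat, (X w <= n%:R)%R])%E.
  rewrite (_ : [set w | _] = setT) ?probability_setT ?lte_fin //.
  apply/seteqP; split => // w _; exists (Num.truncn (X w)).+1.
  exact/ltW/truncnS_gt.
rewrite (cdf_bigcup (u := fun n : nat => n%:R)) => [|m k mk]; last by rewrite ler_nat.
by case/ereal_sup_gt => _ [n _ <-]; exists n%:R.
Qed.

Lemma cdf_lt_exists c : 0 < c -> exists x, (F x < c%:E)%E.
Proof.
move=> c0; have : (P [set w | forall n : nat, (X w <= - n%:R)%R] < c%:E)%E.
  rewrite (_ : [set w | _] = set0) ?measure0 ?lte_fin //.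
  apply/seteqP; split => // w /(_ (Num.truncn (- X w)).+1).
  by rewrite lerNr leNgt truncnS_gt.
rewrite (cdf_bigcap (u := fun n : nat => - n%:R)) => [|m k mk]; last by rewrite lerN2 ler_nat.
by case/ereal_inf_lt => _ [n _ <-]; exists (- n%:R).
Qed.

Lemma cdf_ge_of_right q c :
  (forall x, q < x -> (c <= F x)%E) ->
  (c <= F q)%E.
Proof.
move=> cF; have -> : [set w | X w <= q] = [set w | forall n, X w <= q + n.+1%:R^-1].
  apply/seteqP; split => w /= Xw.
    by move=> n; apply: le_trans Xw _; rewrite lerDl.
  rewrite leNgt; apply/negP => /ltr_add_invr [n /lt_le_trans /(_ (Xw n))].
  by rewrite ltxx.
rewrite (cdf_bigcap (u := fun n => q + n.+1%:R^-1)) => [|m k mk]; last first.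
  by rewrite lerD2l lef_pV2 ?posrE // ler_nat.
by apply: le_ereal_inf_tmp => _ [n _ <-]; apply: cF; rewrite ltrDl.
Qed.

Lemma cdf_lt_le_of_left q c :
  (forall x, x < q -> (F x <= c)%E) ->
  (P [set w | (X w < q)%R] <= c)%E.
Proof.
move=> Fc; have -> : [set w | X w < q] = [set w | exists n, X w <= q - n.+1%:R^-1].
  apply/seteqP; split => w /=; last first.
    by case=> n /le_lt_trans; apply; rewrite gtrDl oppr_lt0.
  by case/ltr_add_invr => n Xn; exists n; rewrite lerBrDr ltW.
rewrite (cdf_bigcup (u := fun n => q - n.+1%:R^-1)) => [|m k mk]; last first.
  by rewrite lerD2l lerN2 lef_pV2 ?posrE // ler_nat.
by apply: ge_ereal_sup => _ [n _ <-]; apply: Fc; rewrite gtrDl oppr_lt0.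
Qed.

(** Both [quantile P a X] (with [c = 1 - a]) and [VaR P p X] (with [c = p])
    are infima of sets [E] squeezed as below. *)
Lemma inf_cdf c (E : set R) : 0 < c < 1 ->
  (forall x, (c%:E < F x)%E -> E x) -> (forall x, E x -> (c%:E <= F x)%E) ->
  [/\ has_lbound E, E !=set0, (c%:E <= F (inf E))%E &
      forall x, x < inf E -> (F x <= c%:E)%E].
Proof.
move=> /andP[c0 c1] gtE Ege.
have nE : E !=set0 by have [x Fx] := cdf_gt_exists c1; exists x; exact: gtE.
have lE : has_lbound E.
  have [x Fx] := cdf_lt_exists c0; exists x => y Ey; rewrite leNgt; apply/negP => yx.
  have := le_lt_trans (Ege _ Ey) (le_lt_trans (le_cdf (ltW yx)) Fx).
  by rewrite ltxx.
split => // [|x xE].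
  apply: cdf_ge_of_right => x /(inf_lt nE) [y Ey yx].
  exact: le_trans (Ege _ Ey) (le_cdf (ltW yx)).
by rewrite leNgt; apply/negP => /gtE /(ge_inf lE); rewrite leNgt xE.
Qed.

Lemma cdf_eq_lt q : continuously_distributed P X -> F q = P [set w | X w < q].
Proof.
move=> cX; have mEq : measurable [set w | X w = q].
  rewrite (_ : [set w | _] = [set w | X w == q]); last by apply/seteqP; split => w /eqP.
  exact/measurable_set_bool/measurable_fun_eqr.
rewrite -(measureU0 (measurable_lt_cst q) mEq (cX q)); congr (P _).
apply/seteqP; split => w /=; last by case=> [/ltW|->].
by rewrite le_eqVlt => /orP[/eqP ->|]; [right|left].
Qed.

Lemma inf_cdf_eq c (E : set R) : continuously_distributed P X -> 0 < c < 1 ->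
  (forall x, (c%:E < F x)%E -> E x) -> (forall x, E x -> (c%:E <= F x)%E) ->
  F (inf E) = c%:E.
Proof.
move=> cX c01 gtE Ege; have [_ _ geF leF] := inf_cdf c01 gtE Ege.
by apply/le_anti; rewrite geF andbT cdf_eq_lt //; exact: cdf_lt_le_of_left.
Qed.

Section quantile.
Variable a : R.
Hypothesis a01 : 0 < a < 1.

Let c01 : 0 < 1 - a < 1.
Proof. by case/andP: a01 => a0 a1; rewrite subr_gt0 a1 ltrBlDl ltrDr a0. Qed.

Lemma quantile_le x : ((1 - a)%:E <= F x)%E -> quantile P a X <= x.
Proof.
have [lE _ _ _] := inf_cdf c01 (fun x => @ltW _ _ _ _) (fun x => id).
exact: ge_inf.
Qed.

Lemma cdf_quantile_ge : ((1 - a)%:E <= F (quantile P a X))%E.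
Proof. by have [] := inf_cdf c01 (fun x => @ltW _ _ _ _) (fun x => id). Qed.

Lemma cdf_quantile : continuously_distributed P X ->
  F (quantile P a X) = (1 - a)%:E.
Proof. by move=> cX; exact: inf_cdf_eq (fun x => @ltW _ _ _ _) (fun x => id). Qed.

Lemma quantile_le_VaR p : 1 - a <= p < 1 -> quantile P a X <= VaR P p X.
Proof.
case/andP=> ap p1; apply: lb_le_inf => [|x /= px].
  by have [x px] := cdf_gt_exists p1; exists x.
by apply: quantile_le; rewrite (le_trans _ (ltW px)) ?lee_fin.
Qed.

End quantile.

Lemma le_quantile a a' : 0 < a -> a <= a' < 1 -> quantile P a' X <= quantile P a X.
Proof.
move=> a0 /andP[aa' a'1].
have a01 : 0 < a < 1 by rewrite a0 (le_lt_trans aa').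
have a'01 : 0 < a' < 1 by rewrite a'1 (lt_le_trans a0).
apply: (quantile_le a'01); apply: le_trans (cdf_quantile_ge a01).
by rewrite lee_fin lerB.
Qed.

Lemma cdf_VaR p : continuously_distributed P X -> 0 < p < 1 -> F (VaR P p X) = p%:E.
Proof. by move=> cX p01; exact: inf_cdf_eq (fun x => id) (fun x => @ltW _ _ _ _). Qed.

Lemma probability_cst_lt x : P [set w | x < X w] = (1 - F x)%E.
Proof.
rewrite -probability_setC; last exact: measurable_le_cst.
by congr (P _); apply/seteqP; split => w /=; rewrite ltNge => /negP.
Qed.

Lemma cdf_ge_tail_le x c :
  ((1 - c)%:E <= F x)%E = (P [set w | (x < X w)%R] <= c%:E)%E.
Proof.
rewrite probability_cst_lt -(fineK (fin_num_measure P _ (measurable_le_cst x))).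
by rewrite -EFinB !lee_fin !lerBlDr addrC.
Qed.

Lemma probability_VaR_tail p : continuously_distributed P X -> 0 < p < 1 ->
  P [set w | VaR P p X < X w] = (1 - p)%:E.
Proof. by move=> cX p01; rewrite probability_cst_lt cdf_VaR. Qed.

(** The guard [0 < l] makes the tail of level [0] empty, [quantile P 0 X]
    being a junk value. *)
Definition upper_tail (l : R) : set T :=
  [set w | (0 < l) && (quantile P l X < X w)].

Lemma measurable_upper_tail l : measurable (upper_tail l).
Proof.
apply/measurable_set_bool/measurable_and; first exact: measurable_cst.
exact: measurable_fun_ltr.
Qed.

Lemma upper_tail0 : upper_tail 0 = set0.
Proof. by apply/seteqP; split => w //; rewrite /upper_tail /= ltxx. Qed.

Lemma probability_upper_tail l : continuously_distributed P X -> 0 <= l < 1 ->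
  P (upper_tail l) = l%:E.
Proof.
move=> cX /andP[]; rewrite le_eqVlt => /orP[/eqP <-|l0 l1].
  by rewrite upper_tail0 measure0.
have -> : upper_tail l = [set w | quantile P l X < X w].
  by apply/seteqP; split => w; rewrite /upper_tail /= l0.
rewrite probability_cst_lt cdf_quantile ?l0 //.
by rewrite -EFinB opprB addrC subrK.
Qed.

Lemma upper_tail_subset l l' : l <= l' < 1 -> upper_tail l `<=` upper_tail l'.
Proof.
case/andP=> ll' l'1 w /andP[l0 Xw]; apply/andP; split; first exact: lt_le_trans ll'.
by apply: le_lt_trans Xw; apply: le_quantile => //; rewrite ll'.
Qed.

Lemma probability_upper_tailD l l' : continuously_distributed P X ->
  0 <= l <= l' -> l' < 1 -> P (upper_tail l' `\` upper_tail l) = (l' - l)%:E.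
Proof.
move=> cX /andP[l0 ll'] l'1; have l'01 : 0 <= l' < 1 by rewrite l'1 (le_trans l0 ll').
have -> : P (upper_tail l' `\` upper_tail l) = (P (upper_tail l') - P (upper_tail l))%E.
  have sub : upper_tail l `<=` upper_tail l' by apply: upper_tail_subset; rewrite ll'.
  rewrite measureD ?(setIidr sub) //; try exact: measurable_upper_tail.
  exact: (le_lt_trans (probability_le1 P (measurable_upper_tail l')) (ltry 1)).
by rewrite !probability_upper_tail // ?EFinB // l0 (le_lt_trans ll').
Qed.

Lemma VaR_tail_sub_upper_tail l p : l < 1 -> 1 - l <= p < 1 ->
  [set w | VaR P p X < X w] `<=` upper_tail l.
Proof.
move=> l1 /andP[lp p1] w Xw; have l0 : 0 < l by move: lp p1; lra.
by apply/andP; split => //; apply: le_lt_trans Xw; apply: quantile_le_VaR; rewrite ?l0 ?lp.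
Qed.

End distribution_function.

(** * The lower bound *)

Lemma VaR_ae_eq d (T : measurableType d) (R : realType) (P : probability T R)
    (Y X : T -> R) p :
  measurable_fun setT Y -> measurable_fun setT X ->
  {ae P, forall w, Y w = X w} -> VaR P p Y = VaR P p X.
Proof.
move=> mY mX YX; have FYX x : P [set w | Y w <= x] = P [set w | X w <= x].
  apply: eq_measure_ae; try exact: measurable_le_cst.
  by apply: filterS YX => w /= ->.
by rewrite /VaR; congr inf; apply/seteqP; split => x /=; rewrite FYX.
Qed.

Lemma comonotone_cut (T : Type) (R : realDomainType) (Y Z : T -> R) (v q : R) :
  (forall w w', v < Z w -> ~ v < Z w' -> 0 <= (Y w - Y w') * (Z w - Z w')) ->
  [set w | q < Y w] `\` [set w | v < Z w] !=set0 ->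
  [set w | v < Z w] `<=` [set w | q < Y w].
Proof.
move=> YZ [w' [qY' nvZ']] w /= vZ.
have Z'Z : Z w' < Z w by apply: le_lt_trans vZ; rewrite leNgt; exact/negP.
have := YZ w w' vZ nvZ'; rewrite pmulr_lge0 ?subr_gt0 // subr_ge0.
exact: lt_le_trans qY'.
Qed.

Lemma comonotone_exceedance_outside_tail d (T : measurableType d) (R : realType)
    (P : probability T R) (Y X : T -> R) (beta b a q : R) :
  measurable_fun setT Y -> measurable_fun setT X -> continuously_distributed P X ->
  comono_beta P beta Y X -> 0 <= b <= beta -> b < 1 ->
  (P [set w | (q < Y w)%R] <= a%:E)%E ->
  (P ([set w | (q < Y w)%R] `\` upper_tail P X b) <= (Num.max (a - b) 0)%:E)%E.
Proof.
move=> mY mX cX [Y' [Z' [mY' mZ' Y'Y Z'X YZ]]] /andP[b0 bbeta] b1 PYa.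
move: b0; rewrite le_eqVlt => /orP[/eqP <-|b_gt0].
  rewrite upper_tail0 setD0; apply: le_trans PYa _.
  by rewrite lee_fin subr0 le_max lexx.
set p := 1 - b; have p01 : 0 < p < 1 by rewrite /p; apply/andP; split; lra.
set v := VaR P p X; set A := [set w | v < X w]; set B := [set w | q < Y w].
set A' := [set w | v < Z' w]; set B' := [set w | q < Y' w].
have mA : measurable A by exact: measurable_cst_lt.
have mB : measurable B by exact: measurable_cst_lt.
have mA' : measurable A' by exact: measurable_cst_lt.
have mB' : measurable B' by exact: measurable_cst_lt.
have PA : P A = b%:E by rewrite probability_VaR_tail // /p opprB addrC subrK.
have PA' : P A' = b%:E.
  by rewrite -PA; apply: eq_measure_ae => //; apply: filterS Z'X => w; rewrite /A /A' /= => ->.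
have PB' : P B' = P B by apply: eq_measure_ae => //; apply: filterS Y'Y => w; rewrite /B /B' /= => ->.
apply: (@le_trans _ _ (P (B' `\` A'))).
  apply: le_measure_ae; [|exact: measurableD|].
  - by apply: measurableD => //; exact: measurable_upper_tail.
  apply: filterS2 Y'Y Z'X => w; rewrite /B /B' /A' /= => -> -> [qY nXw].
  split => // vX.
  by apply: nXw; apply: (VaR_tail_sub_upper_tail mX b1) vX; move: p01; rewrite /p lexx => /andP[].
have [->|/set0P BA'] := eqVneq (B' `\` A') set0.
  by rewrite measure0 lee_fin le_max lexx orbT.
have AB' : A' `<=` B'.
  apply: comonotone_cut BA'; rewrite /v -(VaR_ae_eq p mZ' mX Z'X).
  by case/andP: p01 => _ p1; apply: YZ p1; rewrite /p lerD2l lerN2.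
have -> : P (B' `\` A') = (P B' - P A')%E.
  rewrite measureD ?(setIidr AB') //.
  exact: (le_lt_trans (probability_le1 P mB') (ltry 1)).
rewrite PB' PA'; apply: le_trans (leeB PYa (lexx _)) _.
by rewrite -EFinB lee_fin le_max lexx.
Qed.

Lemma quantile_excess_level_le_V_beta d (T : measurableType d) (R : realType)
    (P : probability T R) (X : T -> R) n (alpha : 'I_n -> R) (beta b : R) :
  measurable_fun setT X -> continuously_distributed P X ->
  (forall i, 0 < alpha i < 1) -> 0 <= b <= beta -> b < 1 ->
  0 < excess_level alpha b < 1 ->
  ((quantile P (excess_level alpha b) X)%:E <= V_beta P alpha beta X)%E.
Proof.
move=> mX cX a01 b0beta b1 g01.
apply: le_ereal_inf_tmp => _ [Xs [mXs Xle com] <-]; rewrite lee_fin.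
set q := fun i => quantile P (alpha i) (Xs i); set S := \sum_(i < n) _.
set B := fun i => [set w | q i < Xs i w]; set Tb := upper_tail P X b.
have mB i : measurable (B i) by exact: measurable_cst_lt.
have mTb : measurable Tb by exact: measurable_upper_tail.
have PB i : (P (B i) <= (alpha i)%:E)%E.
  by rewrite -cdf_ge_tail_le //; exact: cdf_quantile_ge.
have tail_le : (P [set w | (S < X w)%R] <= (excess_level alpha b)%:E)%E.
  apply: le_trans (le_measure_union_bound (D := fun i => B i `\` Tb) _ mTb _ _) _.
  - exact: measurable_cst_lt.
  - by move=> i; exact: measurableD.
  - apply: filterS Xle => w XS SX; have [Tw|nTw] := pselect (Tb w); [by left|right].
    suff [i qX] : exists i, q i < Xs i w by exists i.
    apply: contrapT => /forallNP qX; have : \sum_(i < n) Xs i w <= S.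
      by apply: ler_sum => i _; rewrite leNgt; exact/negP/qX.
    by rewrite leNgt (lt_le_trans SX XS).
  have PTb : (P Tb <= b%:E)%E.
    by rewrite probability_upper_tail ?b1 ?(andP b0beta).1.
  apply: le_trans (leeD PTb _) _.
    apply: lee_sum => i _.
    exact: comonotone_exceedance_outside_tail (mXs i) mX cX (com i) b0beta b1 (PB i).
  by rewrite sumEFin -EFinD.
by apply: (quantile_le mX g01); rewrite cdf_ge_tail_le.
Qed.

(** * The upper bound *)

Section excess_share.
Context d (T : measurableType d) (R : realType) (P : probability T R).
Variables (X : T -> R) (c q : R) (S : set T).
Hypotheses (mX : measurable_fun setT X) (mS : measurable S).

Definition excess_share w : R := c + \1_S w * Num.max (X w - q) 0.

Lemma excess_shareS w : S w -> excess_share w = c + Num.max (X w - q) 0.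
Proof. by move=> Sw; rewrite /excess_share indicE mem_set // mul1r. Qed.

Lemma excess_shareN w : ~ S w -> excess_share w = c.
Proof. by move=> Sw; rewrite /excess_share indicE memNset // mul0r addr0. Qed.

Lemma excess_share_ge w : c <= excess_share w.
Proof. by rewrite /excess_share lerDl mulr_ge0 // ?indicE ?ler0n // le_max lexx orbT. Qed.

Lemma measurable_excess_share : measurable_fun setT excess_share.
Proof.
apply: measurable_funD; first exact: measurable_cst.
apply: measurable_funM; first exact: measurable_indic.
by apply: measurable_maxr => //; apply: measurable_funB => //; exact: measurable_cst.
Qed.

Lemma quantile_excess_share_le a : 0 < a < 1 -> (P S <= a%:E)%E ->
  quantile P a excess_share <= c.
Proof.
move=> a01 PS; apply: (quantile_le measurable_excess_share a01).
rewrite cdf_ge_tail_le; last exact: measurable_excess_share.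
apply: le_trans PS; rewrite le_measure ?inE //; first exact: measurable_cst_lt measurable_excess_share c.
by move=> w /= cY; apply: contrapT => /excess_shareN Yc; move: cY; rewrite Yc ltxx.
Qed.

Lemma comono_excess_share beta :
  (forall p, 1 - beta <= p -> p < 1 -> forall w w',
     VaR P p X < X w -> ~ VaR P p X < X w' -> S w' -> q < X w' -> S w) ->
  comono_beta P beta excess_share X.
Proof.
move=> upS; exists excess_share, X; split => //; try exact: aeW.
  exact: measurable_excess_share.
move=> p bp p1 w w' Xw nXw'.
have X'X : X w' < X w by apply: (le_lt_trans _ Xw); rewrite leNgt; exact/negP.
apply: mulr_ge0; last by rewrite subr_ge0 ltW.
rewrite subr_ge0; have [Sw'|/excess_shareN ->] := pselect (S w'); last exact: excess_share_ge.
have [qX'|X'q] := ltP q (X w'); last first.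
  rewrite excess_shareS // (_ : Num.max _ _ = 0) ?addr0 ?excess_share_ge //.
  by apply/max_idPr; rewrite subr_le0.
have Sw : S w by exact: (upS p bp p1 w w').
by rewrite !excess_shareS // lerD2l le_max2 // lerD2r ltW.
Qed.

End excess_share.

Lemma V_beta_le_of_cover d (T : measurableType d) (R : realType)
    (P : probability T R) (X : T -> R) n (alpha : 'I_n -> R) (beta q : R)
    (k : 'I_n) (S : 'I_n -> set T) :
  measurable_fun setT X -> (forall i, 0 < alpha i < 1) ->
  (forall i, measurable (S i)) -> (forall i, (P (S i) <= (alpha i)%:E)%E) ->
  (forall w, q < X w -> exists i, S i w) ->
  (forall i p, 1 - beta <= p -> p < 1 -> forall w w',
     VaR P p X < X w -> ~ VaR P p X < X w' -> S i w' -> q < X w' -> S i w) ->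
  (V_beta P alpha beta X <= q%:E)%E.
Proof.
move=> mX a01 mS PS cover upS.
pose c i := if i == k then q else 0.
have sum_c : \sum_i c i = q.
  by rewrite (bigD1 k) //= /c eqxx big1 ?addr0 // => i /negbTE ->.
pose Xs i := excess_share X (c i) q (S i).
apply: ge_ereal_inf; exists ((\sum_i quantile P (alpha i) (Xs i))%:E); last first.
  rewrite lee_fin -sum_c; apply: ler_sum => i _.
  exact: (quantile_excess_share_le (c i) q mX (mS i) (a01 i) (PS i)).
exists Xs => //; split => [i||i]; last exact: comono_excess_share (upS i).
  exact: measurable_excess_share _ _ mX (mS i).
apply: aeW => w; have [qX|Xq] := ltP q (X w); last first.
  apply: le_trans Xq _; rewrite -sum_c; apply: ler_sum => i _.
  exact: excess_share_ge.
have [i Sw] := cover w qX.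
apply: (@le_trans _ _ (\sum_j c j + Num.max (X w - q) 0)).
  by rewrite sum_c -lerBlDl le_max lexx.
rewrite (bigD1 i) //= [leRHS](bigD1 i) //= {1}/Xs excess_shareS // addrAC lerD2l.
by apply: ler_sum => j _; exact: excess_share_ge.
Qed.

Lemma exists_crossing (U : nat -> Prop) n : U 0%N -> ~ U n ->
  exists2 j, (j < n)%N & U j /\ ~ U j.+1.
Proof.
elim: n => [//|n IH] U0 nUn.
have [Un|/(IH U0) [j jn Uj]] := pselect (U n); first by exists n.
by exists j => //; exact: ltnW.
Qed.

Section layers.
Context d (T : measurableType d) (R : realType) (P : probability T R).
Variables (X : T -> R) (n : nat) (alpha : 'I_n -> R) (b : R).
Local Notation lev := (partial_excess_level alpha b).

Definition layer (i : 'I_n) : set T :=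
  upper_tail P X (lev i.+1) `\` upper_tail P X (lev i).

Lemma measurable_layer i : measurable_fun setT X -> measurable (layer i).
Proof. by move=> mX; apply: measurableD; exact: measurable_upper_tail. Qed.

Lemma probability_layer i :
  measurable_fun setT X -> continuously_distributed P X ->
  0 <= b -> excess_level alpha b < 1 ->
  P (layer i) = (Num.max (alpha i - b) 0)%:E.
Proof.
move=> mX cX b0 g1; have lev01 j : (j <= n)%N -> 0 <= lev j < 1.
  move=> jn; apply/andP; split.
    apply: le_trans b0 _.
    by rewrite -{1}(partial_excess_level0 alpha b) le_partial_excess_level.
  by apply: le_lt_trans g1; rewrite -partial_excess_level_n le_partial_excess_level.
rewrite probability_upper_tailD //.
- by rewrite partial_excess_levelS addrAC subrr add0r.
- by rewrite (andP (lev01 _ (ltnW (ltn_ord i)))).1 /= le_partial_excess_level.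
- by case/andP: (lev01 _ (ltn_ord i)).
Qed.

Lemma lt_alpha_of_layer i w : layer i w -> b < alpha i.
Proof.
move=> [t1 nt]; rewrite ltNge; apply/negP => aib; apply: nt; move: t1.
rewrite partial_excess_levelS (_ : Num.max _ _ = 0) ?addr0 //.
by apply/max_idPr; rewrite subr_le0.
Qed.

Lemma upper_tail_sub_layers w : upper_tail P X (excess_level alpha b) w ->
  ~ upper_tail P X b w -> exists i, layer i w.
Proof.
rewrite -partial_excess_level_n => tn; rewrite -(partial_excess_level0 alpha b) => t0.
have [j jn [ntj /contrapT tj1]] :=
  @exists_crossing (fun j => ~ upper_tail P X (lev j) w) n t0 (fun h => h tn).
by exists (Ordinal jn).
Qed.

End layers.

Lemma V_beta_le_excess_level_quantile d (T : measurableType d) (R : realType)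
    (P : probability T R) (X : T -> R) n (alpha : 'I_n -> R) (beta b : R)
    (k : 'I_n) :
  measurable_fun setT X -> continuously_distributed P X ->
  (forall i, 0 < alpha i < 1) -> 0 <= b <= beta -> b <= alpha k ->
  (forall i, b < alpha i -> beta <= b) -> excess_level alpha b < 1 ->
  (V_beta P alpha beta X <= (quantile P (excess_level alpha b) X)%:E)%E.
Proof.
move=> mX cX a01 /andP[b0 bbeta] bak beta_le_b g1.
have b1 : b < 1 by apply: le_lt_trans bak _; case/andP: (a01 k).
have g0 : 0 < excess_level alpha b.
  by apply: lt_le_trans (le_excess_level alpha b k); case/andP: (a01 k).
pose top i := if b <= alpha i then upper_tail P X b else set0.
have mtop i : measurable (top i).
  by rewrite /top; case: ifP => _ //; exact: measurable_upper_tail.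
apply: (V_beta_le_of_cover k (S := fun i => top i `|` layer P X alpha b i)) => //.
- by move=> i; apply: measurableU => //; exact: measurable_layer.
- move=> i; have : (P (top i `|` layer P X alpha b i) <=
                    P (top i) + P (layer P X alpha b i))%E.
    by apply: measureU2 => //; exact: measurable_layer.
  move/le_trans; apply; rewrite probability_layer // /top; case: ifPn => bai.
    rewrite probability_upper_tail ?b0 // -EFinD lee_fin.
    rewrite (_ : Num.max _ _ = alpha i - b); first by rewrite addrC subrK.
    by apply/max_idPl; rewrite subr_ge0.
  rewrite measure0 add0e lee_fin (_ : Num.max _ _ = 0); first by case/andP: (a01 i) => /ltW.
  by apply/max_idPr; rewrite subr_le0 ltW // ltNge.
- move=> w qX; have [Tw|nTw] := pselect (upper_tail P X b w).
    by exists k; left; rewrite /top bak.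
  have [i Lw] : exists i, layer P X alpha b i w.
    by apply: (upper_tail_sub_layers _ nTw); apply/andP.
  by exists i; right.
- move=> i p bp p1 w w' Xw nXw' Sw' _.
  have X'X : X w' < X w by apply: (le_lt_trans _ Xw); rewrite leNgt; exact/negP.
  case: Sw' => [|/lt_alpha_of_layer bai]; rewrite /top; last first.
    left; rewrite ifT ?(ltW bai) //; apply: (VaR_tail_sub_upper_tail mX b1) Xw.
    by rewrite p1 andbT (le_trans _ bp) // lerD2l lerN2 (beta_le_b i bai).
  case: ifP => // _ /andP[b_pos QX']; left; apply/andP; split => //.
  exact: lt_trans X'X.
Qed.

Theorem theorem6p1 (d : measure_display) (T : measurableType d) (R : realType)
  (P : probability T R) (X : T -> R) (n : nat) (alpha : 'I_n -> R) (beta : R) :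
  atomless P ->
  measurable_fun setT X ->
  continuously_distributed P X ->
  (1 <= n)%N ->
  (forall i, 0 < alpha i) ->
  \sum_(i < n) alpha i < 1 ->
  0 <= beta <= 1 ->
  V_beta P alpha beta X =
    (quantile P
       (Num.min beta (\big[Num.max/0]_(i < n) alpha i)
        + \sum_(i < n) Num.max (alpha i - beta) 0) X)%:E.
Proof.
move=> _ mX cX n_gt0 a_gt0 a_sum /andP[beta0 _].
have a01 i : 0 < alpha i < 1.
  rewrite a_gt0 (le_lt_trans _ a_sum) // (bigD1 i) //= lerDl.
  by apply: sumr_ge0 => j _; exact: ltW.
have [k _ Mk] : {k : 'I_n | k \in predT & \big[Num.max/0]_(i < n) alpha i = alpha k}.
  by apply: (Order.TotalTheory.eq_bigmax (Ordinal n_gt0)) => // i _; exact: ltW.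
have ak i : alpha i <= alpha k by rewrite -Mk; exact: le_bigmax.
rewrite Mk -excess_level_min //; set b := Num.min beta (alpha k).
have b0 : 0 <= b by rewrite le_min beta0 ltW.
have bak : b <= alpha k by rewrite ge_min lexx orbT.
have g0 : 0 < excess_level alpha b := lt_le_trans (a_gt0 k) (le_excess_level alpha b k).
have g1 : excess_level alpha b < 1.
  apply: le_lt_trans a_sum; apply: (excess_level_le_sum (k := k)); last by rewrite b0 bak.
  by move=> i; exact: ltW.
apply/le_anti/andP; split.
- apply: V_beta_le_excess_level_quantile bak _ g1 => //; first by rewrite b0 ge_min lexx.
  move=> i; rewrite /b minEle; case: ifP => [_ _|_ /lt_le_trans/(_ (ak i))]; first exact: lexx.
  by rewrite ltxx.
- apply: quantile_excess_level_le_V_beta => //; last by rewrite g0.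
  + by rewrite b0 ge_min lexx.
  + by apply: le_lt_trans bak _; case/andP: (a01 k).
Qed.
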